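(* Let $m\ge1$, $\epsilon\in\{1,-1\}$, and let $M,M'\subset\mathbb{C}^2$ be (formal or real-analytic) hypersurfaces each given by an equation of the form $v=\frac12u^m\bigl(\epsilon|z|^2+\sum_{k,l\ge2}h_{kl}(u)z^k\bar z^l\bigr)$, $w=u+iv$ (with the same $m$ and $\epsilon$). Let $H(z,w)=(F(z,w),G(z,w))$ be a formal transformation with $H(0)=0$ and invertible Jacobian $H'(0)$ which maps $M$ into $M'$. Then there are $\lambda\in\mathbb{C}\setminus\{0\}$ and $\mu\in\mathbb{R}$ with $F_z(0,0)=\lambda$, $G_w(0,0)=\mu$, $\mu^{1-m}=|\lambda|^2$, and moreover $G=O(w)$ and $G_z=O(w^{m+1})$. In addition, $\frac{\partial^\ell G}{\partial w^\ell}(0,0)\in\mathbb{R}$ for all $\ell\le m$.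
   Context: $O(w^k)$ means divisibility of the formal power series by $w^k$. *)

From HB Require Import structures.
From mathcomp Require Import all_boot all_order all_algebra.
From mathcomp Require Import complex.
From mathcomp Require Export reals.
Set Implicit Arguments. Unset Strict Implicit. Unset Printing Implicit Defensive.
Import Order.TTheory GRing.Theory Num.Theory.
Local Open Scope ring_scope.
Local Open Scope complex_scope.

Section FPS.
Variable K : comNzRingType.

(** Formal power series in two variables (z, w): [P a b] is the coefficient
    of z^a w^b. *)
Definition fps2 := nat -> nat -> K.
(** Formal power series in three variables (z, chi, u): [P a b c] is the
    coefficient of z^a chi^b u^c  (chi plays the role of \bar z). *)
Definition fps3 := nat -> nat -> nat -> K.

Definition add3 (P Q : fps3) : fps3 := fun a b c => P a b c + Q a b c.
Definition sub3 (P Q : fps3) : fps3 := fun a b c => P a b c - Q a b c.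
Definition scale3 (k : K) (P : fps3) : fps3 := fun a b c => k * P a b c.
Definition one3 : fps3 := fun a b c => ((a == 0%N) && (b == 0%N) && (c == 0%N))%:R.
Definition Z3 : fps3 := fun a b c => ((a == 1%N) && (b == 0%N) && (c == 0%N))%:R.
Definition X3 : fps3 := fun a b c => ((a == 0%N) && (b == 1%N) && (c == 0%N))%:R.
Definition U3 : fps3 := fun a b c => ((a == 0%N) && (b == 0%N) && (c == 1%N))%:R.

Definition mul3 (P Q : fps3) : fps3 := fun a b c =>
  \sum_(i < a.+1) \sum_(j < b.+1) \sum_(k < c.+1)
     P i j k * Q (a - i)%N (b - j)%N (c - k)%N.
Definition pow3 (P : fps3) (n : nat) : fps3 := iter n (mul3 P) one3.

(** The coefficient of a monomial
    of total degree d only receives contributions from i + j <= d (since A, B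
    have no constant term), so the sum is truncated at i, j <= d. *)
Definition comp2 (P : fps2) (A B : fps3) : fps3 := fun a b c =>
  let d := (a + b + c)%N in
  \sum_(i < d.+1) \sum_(j < d.+1) P i j * mul3 (pow3 A i) (pow3 B j) a b c.

Definition comp3 (P : fps3) (A B D : fps3) : fps3 := fun a b c =>
  let d := (a + b + c)%N in
  \sum_(i < d.+1) \sum_(j < d.+1) \sum_(k < d.+1)
     P i j k * mul3 (mul3 (pow3 A i) (pow3 B j)) (pow3 D k) a b c.

Definition dz (P : fps2) : fps2 := fun a b => (a.+1)%:R * P a.+1 b.
Definition dw (P : fps2) : fps2 := fun a b => (b.+1)%:R * P a b.+1.
Definition dwn (l : nat) (P : fps2) : fps2 := iter l dw P.

Definition O_w (k : nat) (P : fps2) : Prop := forall a b, (b < k)%N -> P a b = 0.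

End FPS.

Section Hypersurface.
Variable R : realType.
Local Notation C := R[i].

Definition conj2 (P : fps2 C) : fps2 C := fun a b => (P a b)^*.

(** [h k l c] is the coefficient of u^c in the series h_{kl}(u) (only k,l >= 2
    are used).  The right-hand side  phi(z, \bar z, u) =
    1/2 u^m (eps z \bar z + sum_{k,l>=2} h_{kl}(u) z^k \bar z^l)
    of the equation  v = phi  of the hypersurface, as a series in (z,chi,u). *)
Definition hyp_phi (m : nat) (eps : R) (h : nat -> nat -> nat -> C) : fps3 C :=
  fun a b c =>
    if (c < m)%N then 0 else
    2^-1 * (eps%:C * ((a == 1%N) && (b == 1%N) && (c == m))%:R
            + ((2 <= a)%N && (2 <= b)%N)%:R * h a b (c - m)%N).

(** reality of the defining equation: conj(h_{kl}) = h_{lk}, so that phi is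
    real-valued and v = phi defines a real hypersurface *)
Definition hyp_real (h : nat -> nat -> nat -> C) : Prop :=
  forall k l c, (2 <= k)%N -> (2 <= l)%N -> h l k c = (h k l c)^*.

(** The formal map H = (F, G) sends M = {v = phi} into M' = {v = phi'}:
    the defining function  rho'(z',w',chi',tau') = (w'-tau')/(2i)
    - phi'(z',chi',(w'+tau')/2)  composed with (H(z,w), \bar H(chi,tau))
    vanishes on the complexification of M, parametrized by (z, chi, u) via
    w = u + i phi(z,chi,u), tau = u - i phi(z,chi,u). *)
Definition maps_into (phi phi' : fps3 C) (F G : fps2 C) : Prop :=
  let W := add3 (U3 C) (scale3 'i phi) in
  let T := sub3 (U3 C) (scale3 'i phi) in
  let FW := comp2 F (Z3 C) W in
  let GW := comp2 G (Z3 C) W in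
  let FbT := comp2 (conj2 F) (X3 C) T in
  let GbT := comp2 (conj2 G) (X3 C) T in
  forall a b c,
    GW a b c - GbT a b c
    = 2%:R * 'i * comp3 phi' FW FbT (scale3 (2^-1) (add3 GW GbT)) a b c.

Definition jac0 (F G : fps2 C) : 'M[C]_2 :=
  \matrix_(i < 2, j < 2)
     (if i == 0 then (if j == 0 then dz F 0 0 else dw F 0 0)
      else (if j == 0 then dz G 0 0 else dw G 0 0)).

End Hypersurface.

From HB Require Import structures.
From mathcomp Require Import all_boot all_order all_algebra.
From mathcomp Require Import complex.
From mathcomp Require Import reals.
From mathcomp Require Import zify ring.
From Stdlib Require Import FunctionalExtensionality.
Set Implicit Arguments. Unset Strict Implicit. Unset Printing Implicit Defensive.
Import Order.TTheory GRing.Theory Num.Theory.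
Local Open Scope ring_scope.
Local Open Scope complex_scope.

(* Put chi = \bar z = 0 in the complexified mapping identity.  Then w = tau = u and
   the identity reads G(z, u) - \bar G(0, u) = 2i phi'(F(z, u), \bar F(0, u), s) with
   s = (G(z, u) + \bar G(0, u)) / 2.  Every term of phi' contains chi' u'^m, and
   chi' = \bar F(0, u) = O(u); hence first G(z, 0) = 0, so that s = O(u), and then the
   right-hand side is O(u^(m+1)).  Thus G(z, u) = \bar G(0, u) mod u^(m+1), which gives
   G = O(w), G_z = O(w^(m+1)) and the reality of the Taylor coefficients of G(0, w) up
   to order m.  In the coefficient of z \bar z u^m only the leading terms eps z \bar z u^m
   of phi and phi' contribute, giving G_w = |F_z|^2 G_w^m at 0; the Jacobian at 0 is
   F_z G_w, so G_w(0) != 0 and G_w(0)^(1-m) = |F_z(0)|^2. *)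

Section Sums.
Variable K : comNzRingType.

Lemma sum_ord_supp1 n p (f : nat -> K) :
  (forall i, (i < n)%N -> i != p -> f i = 0) ->
  \sum_(i < n) f i = if (p < n)%N then f p else 0.
Proof.
move=> f0; rewrite -(big_ord1_eq +%R) [RHS]big_mkcond; apply: eq_bigr => i _.
by case: eqP => // /eqP; apply: f0.
Qed.

Lemma sum_ord2_supp1 n1 n2 p q (f : nat -> nat -> K) :
  (forall i j, (i < n1)%N -> (j < n2)%N -> ~~ ((i == p) && (j == q)) -> f i j = 0) ->
  \sum_(i < n1) \sum_(j < n2) f i j
  = if (p < n1)%N && (q < n2)%N then f p q else 0.
Proof.
move=> f0; rewrite (sum_ord_supp1 (p := p) (f := fun i => \sum_(j < n2) f i j)).
  case: ifP => //= np; rewrite (sum_ord_supp1 (p := q)) // => j nj jq.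
  by apply: f0; rewrite // negb_and jq orbT.
by move=> i ni ip; apply: big1 => j _; apply: f0 => //; rewrite negb_and ip.
Qed.

Lemma sum_ord3_supp1 n1 n2 n3 p q r (f : nat -> nat -> nat -> K) :
  (forall i j k, (i < n1)%N -> (j < n2)%N -> (k < n3)%N ->
     ~~ [&& i == p, j == q & k == r] -> f i j k = 0) ->
  \sum_(i < n1) \sum_(j < n2) \sum_(k < n3) f i j k
  = if [&& (p < n1)%N, (q < n2)%N & (r < n3)%N] then f p q r else 0.
Proof.
move=> f0; rewrite (sum_ord_supp1 (p := p)
  (f := fun i => \sum_(j < n2) \sum_(k < n3) f i j k)).
  case: ifP => //= np; rewrite (sum_ord2_supp1 (p := q) (q := r)) // => j k nj nk jk.
  by apply: f0; rewrite // eqxx.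
move=> i ni ip; apply: big1 => j _; apply: big1 => k _.
by apply: f0 => //; rewrite negb_and ip.
Qed.

End Sums.

Section Series.
Variable K : comNzRingType.
Implicit Types P Q : fps3 K.

Definition mon3 p q r : fps3 K :=
  fun a b c => ((a == p) && (b == q) && (c == r))%:R.

Lemma fps3_ext P Q : (forall a b c, P a b c = Q a b c) -> P = Q.
Proof.
by move=> PQ; do 3!apply: functional_extensionality => ?; apply: PQ.
Qed.

Lemma mul3_supp1 P Q a b c p q r :
  (forall i j k, (i <= a)%N -> (j <= b)%N -> (k <= c)%N ->
     ~~ [&& i == p, j == q & k == r] ->
     P i j k * Q (a - i)%N (b - j)%N (c - k)%N = 0) ->
  mul3 P Q a b c = if [&& (p <= a)%N, (q <= b)%N & (r <= c)%N]
                   then P p q r * Q (a - p)%N (b - q)%N (c - r)%N else 0.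
Proof.
by move=> PQ0; rewrite /mul3 (sum_ord3_supp1 (p := p) (q := q) (r := r)
  (f := fun i j k => P i j k * Q (a - i)%N (b - j)%N (c - k)%N)).
Qed.

Lemma mul3_monl p q r Q a b c :
  mul3 (mon3 p q r) Q a b c =
  if [&& (p <= a)%N, (q <= b)%N & (r <= c)%N]
  then Q (a - p)%N (b - q)%N (c - r)%N else 0.
Proof.
rewrite (mul3_supp1 (p := p) (q := q) (r := r)) /mon3; first by rewrite !eqxx mul1r.
by move=> i j k _ _ _; rewrite andbA => /negbTE ->; rewrite mul0r.
Qed.

Lemma mul3_monr p q r Q a b c :
  mul3 Q (mon3 p q r) a b c =
  if [&& (p <= a)%N, (q <= b)%N & (r <= c)%N]
  then Q (a - p)%N (b - q)%N (c - r)%N else 0.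
Proof.
rewrite (mul3_supp1 (p := (a - p)%N) (q := (b - q)%N) (r := (c - r)%N)) /mon3.
  rewrite !leq_subr /=; case: ifP => [/and3P[pa qb rc] | pqr].
    by rewrite !subKn // !eqxx mulr1.
  have -> : ((a - (a - p) == p) && (b - (b - q) == q) && (c - (c - r) == r))%N = false
    by lia.
  by rewrite mulr0.
move=> i j k ia jb kc ijk.
have -> : ((a - i == p) && (b - j == q) && (c - k == r))%N = false by lia.
by rewrite mulr0.
Qed.

Lemma pow3_mon p q r n : pow3 (mon3 p q r) n = mon3 (n * p)%N (n * q)%N (n * r)%N.
Proof.
elim: n => [|n IHn] //=; apply: fps3_ext => a b c.
rewrite mul3_monl IHn /mon3 !mulSn.
case: ifP => [/and3P[pa qb rc] | pqr]; first by congr _%:R; lia.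
case: (_ && _) / andP => // -[/andP[/eqP ea /eqP eb] /eqP ec].
by move: pqr; rewrite ea eb ec !leq_addr.
Qed.

Lemma pow3_1 P : pow3 P 1 = P.
Proof. by apply: fps3_ext => a b c; rewrite /= -[one3 K]/(mon3 0 0 0) mul3_monr !subn0. Qed.

Lemma mul3_addl P P' Q a b c :
  mul3 (add3 P P') Q a b c = mul3 P Q a b c + mul3 P' Q a b c.
Proof.
rewrite /mul3 -big_split; apply: eq_bigr => i _; rewrite -big_split.
by apply: eq_bigr => j _; rewrite -big_split; apply: eq_bigr => k _; apply: mulrDl.
Qed.

Lemma mul3_scalel s P Q a b c : mul3 (scale3 s P) Q a b c = s * mul3 P Q a b c.
Proof.
rewrite /mul3 mulr_sumr; apply: eq_bigr => i _; rewrite mulr_sumr.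
by apply: eq_bigr => j _; rewrite mulr_sumr; apply: eq_bigr => k _; rewrite mulrA.
Qed.

Lemma eq_mul3l P P' Q a b c :
  (forall i j k, (i <= a)%N -> (j <= b)%N -> (k <= c)%N -> P i j k = P' i j k) ->
  mul3 P Q a b c = mul3 P' Q a b c.
Proof.
move=> PP'; apply: eq_bigr => i _; apply: eq_bigr => j _; apply: eq_bigr => k _.
by rewrite PP' // -ltnS.
Qed.

Section WeightedOrder.
Variable w : nat -> nat -> nat -> nat.
Hypothesis wD : forall a b c a' b' c',
  w (a + a')%N (b + b')%N (c + c')%N = (w a b c + w a' b' c')%N.

Definition ordw n P := forall a b c, (w a b c < n)%N -> P a b c = 0.

Lemma ordw0 P : ordw 0 P. Proof. by []. Qed.

Lemma ordw_leq p q P : (q <= p)%N -> ordw p P -> ordw q P.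
Proof. by move=> qp Pp a b c wq; apply: Pp; apply: leq_trans qp. Qed.

Lemma ordwM p q P Q : ordw p P -> ordw q Q -> ordw (p + q)%N (mul3 P Q).
Proof.
move=> Pp Qq a b c wpq; apply: big1 => i _; apply: big1 => j _; apply: big1 => k _.
have [wi|wi] := ltnP (w i j k) p; first by rewrite Pp ?mul0r.
have [ia jb kc] : [/\ i <= a, j <= b & k <= c]%N := And3 (ltn_ord i) (ltn_ord j) (ltn_ord k).
rewrite Qq ?mulr0 //; have := wD i j k (a - i) (b - j) (c - k).
by rewrite !subnKC // => wa; rewrite wa in wpq; lia.
Qed.

Lemma ordwX p P n : ordw p P -> ordw (n * p)%N (pow3 P n).
Proof. by move=> Pp; elim: n => [|n IHn] //=; rewrite mulSn; apply: ordwM. Qed.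

End WeightedOrder.

Lemma ordw_mono w w' n P : (forall a b c, (w a b c <= w' a b c)%N) ->
  ordw w n P -> ordw w' n P.
Proof. by move=> ww' Pn a b c w'n; apply: Pn; apply: leq_ltn_trans (ww' a b c) w'n. Qed.

Definition deg_tot (a b c : nat) := (a + b + c)%N.
Definition deg_chi_u (a b c : nat) := (b + c)%N.

Lemma deg_chi_u_le_tot a b c : (deg_chi_u a b c <= deg_tot a b c)%N.
Proof. by rewrite /deg_chi_u /deg_tot -addnA leq_addl. Qed.

Lemma deg_totD a b c a' b' c' :
  deg_tot (a + a') (b + b') (c + c') = (deg_tot a b c + deg_tot a' b' c')%N.
Proof. by rewrite /deg_tot; lia. Qed.

Lemma deg_chi_uD a b c a' b' c' :
  deg_chi_u (a + a') (b + b') (c + c') = (deg_chi_u a b c + deg_chi_u a' b' c')%N.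
Proof. by rewrite /deg_chi_u; lia. Qed.

Lemma pow3_chi0 Y : (forall i k, Y i 0%N k = U3 K i 0%N k) ->
  forall n a c, pow3 Y n a 0%N c = ((a == 0%N) && (c == n))%:R.
Proof.
move=> Yu; elim=> [|n IHn] a c /=; first by rewrite /one3 eqxx andbT.
rewrite (eq_mul3l (P' := mon3 0 0 1)) => [|i j k _]; last by rewrite leqn0 => /eqP-> _; apply: Yu.
rewrite mul3_monl IHn /= !subn0; case: ifP => [c1|c0]; first by congr _%:R; lia.
by have -> : ((a == 0%N) && (c == n.+1)) = false by lia.
Qed.

Lemma comp2_Z3E (P : fps2 K) Y a b c : comp2 P (Z3 K) Y a b c =
  \sum_(i < (a + b + c).+1) \sum_(j < (a + b + c).+1)
     P i j * (if (i <= a)%N then pow3 Y j (a - i)%N b c else 0).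
Proof.
apply: eq_bigr => i _; apply: eq_bigr => j _.
by rewrite -[Z3 K]/(mon3 1 0 0) pow3_mon mul3_monl !muln0 muln1 !leq0n !andbT !subn0.
Qed.

Lemma comp2_X3E (P : fps2 K) Y a b c : comp2 P (X3 K) Y a b c =
  \sum_(i < (a + b + c).+1) \sum_(j < (a + b + c).+1)
     P i j * (if (i <= b)%N then pow3 Y j a (b - i)%N c else 0).
Proof.
apply: eq_bigr => i _; apply: eq_bigr => j _.
by rewrite -[X3 K]/(mon3 0 1 0) pow3_mon mul3_monl !muln0 muln1 /= leq0n andbT !subn0.
Qed.

Section RestrictionChi0.
Variable Y : fps3 K.
Hypothesis Yu : forall i k, Y i 0%N k = U3 K i 0%N k.

Lemma comp2_Z3_chi0 (P : fps2 K) a c : comp2 P (Z3 K) Y a 0 c = P a c.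
Proof.
rewrite comp2_Z3E (sum_ord2_supp1 (p := a) (q := c)
  (f := fun i j => P i j * (if (i <= a)%N then pow3 Y j (a - i)%N 0 c else 0))).
  rewrite leqnn subnn (pow3_chi0 Yu) !eqxx mulr1.
  by have -> : ((a < (a + 0 + c).+1) && (c < (a + 0 + c).+1))%N by lia.
move=> i j _ _ ij; case: ifP => ia; last by rewrite mulr0.
rewrite (pow3_chi0 Yu).
have -> : (((a - i)%N == 0%N) && (c == j)) = false by lia.
by rewrite mulr0.
Qed.

Lemma comp2_X3_chi0 (P : fps2 K) a c :
  comp2 P (X3 K) Y a 0 c = (a == 0%N)%:R * P 0%N c.
Proof.
rewrite comp2_X3E (sum_ord2_supp1 (p := 0) (q := c)
  (f := fun i j => P i j * (if (i <= 0)%N then pow3 Y j a (0 - i)%N c else 0))).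
  rewrite leqnn (pow3_chi0 Yu) !eqxx andbT mulrC.
  by have -> : ((0 < (a + 0 + c).+1) && (c < (a + 0 + c).+1))%N by lia.
move=> i j _ _ ij; case: ifP => i0; last by rewrite mulr0.
rewrite (pow3_chi0 Yu).
have -> : ((a == 0%N) && (c == j)) = false by lia.
by rewrite mulr0.
Qed.

End RestrictionChi0.

Section LeadingTerm.
Variables (m : nat) (kap : K) (Y : fps3 K).
Hypothesis m_gt0 : (1 <= m)%N.
Hypothesis Yu : forall i j k, (i <= 1)%N -> (j <= 1)%N ->
  Y i j k = U3 K i j k + kap * mon3 1 1 m i j k.

Lemma pow3_box n a b c : (a <= 1)%N -> (b <= 1)%N ->
  pow3 Y n a b c = if (a == 0%N) && (b == 0%N) then (c == n)%:R
                   else if (a == 1%N) && (b == 1%N) then n%:R * kap * (c == (n + m).-1)%:R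
                   else 0.
Proof.
elim: n a b c => [|n IHn] a b c a1 b1 /=.
  by case: a a1 => [|[|a]] // _; case: b b1 => [|[|b]] // _ /=; rewrite ?mul0r.
rewrite (eq_mul3l (P' := add3 (mon3 0 0 1) (scale3 kap (mon3 1 1 m)))); last first.
  by move=> i j k ia jb _; rewrite /add3 /scale3 Yu // ?(leq_trans ia a1) ?(leq_trans jb b1).
rewrite mul3_addl mul3_scalel !mul3_monl.
case: a a1 => [|[|a]] // _; case: b b1 => [|[|b]] // _ /=;
  rewrite ?subn0 ?subnn !IHn //= ?mulr0 ?addr0.
- case: ifP => [c1|c0]; first by congr _%:R; lia.
  by have -> : (c == n.+1) = false by lia.
- by case: ifP.
- by case: ifP.
have -> : (if (1 <= c)%N then n%:R * kap * ((c - 1)%N == (n + m).-1)%:R else 0)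
          = n%:R * kap * (c == n + m)%:R.
  case: ifP => c1; first by have -> : ((c - 1)%N == (n + m).-1) = (c == n + m) by lia.
  have -> : (c == n + m) = false by lia.
  by rewrite mulr0.
have -> : (if (m <= c)%N then ((c - m)%N == n)%:R else 0) = (c == n + m)%:R :> K.
  case: ifP => cm; first by congr _%:R; lia.
  by have -> : (c == n + m) = false by lia.
by rewrite -natr1 !mulrDl mul1r.
Qed.

Lemma comp2_Z3_11m (P : fps2 K) : comp2 P (Z3 K) Y 1 1 m = P 0%N 1%N * kap.
Proof.
rewrite comp2_Z3E (sum_ord2_supp1 (p := 0) (q := 1)
  (f := fun i j => P i j * (if (i <= 1)%N then pow3 Y j (1 - i)%N 1 m else 0))).
  by rewrite pow3_box //= mul1r eqxx mulr1.
move=> [|[|i]] j // _ _ ij /=; last by rewrite mulr0.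
  rewrite pow3_box //=; have -> : (m == (j + m).-1) = false by lia.
  by rewrite !mulr0.
by rewrite pow3_box //= mulr0.
Qed.

Lemma comp2_X3_11m (P : fps2 K) : comp2 P (X3 K) Y 1 1 m = P 0%N 1%N * kap.
Proof.
rewrite comp2_X3E (sum_ord2_supp1 (p := 0) (q := 1)
  (f := fun i j => P i j * (if (i <= 1)%N then pow3 Y j 1 (1 - i)%N m else 0))).
  by rewrite pow3_box //= mul1r eqxx mulr1.
move=> [|[|i]] j // _ _ ij /=; last by rewrite mulr0.
  rewrite pow3_box //=; have -> : (m == (j + m).-1) = false by lia.
  by rewrite !mulr0.
by rewrite pow3_box //= mulr0.
Qed.

Lemma comp2_Z3_010 (P : fps2 K) : comp2 P (Z3 K) Y 0 1 0 = 0.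
Proof.
rewrite comp2_Z3E; apply: big1 => i _; apply: big1 => j _.
by case: ifP => _; rewrite ?sub0n ?pow3_box //= mulr0.
Qed.

Lemma comp2_X3_010 (P : fps2 K) : comp2 P (X3 K) Y 0 1 0 = P 1%N 0%N.
Proof.
rewrite comp2_X3E (sum_ord2_supp1 (p := 1) (q := 0)
  (f := fun i j => P i j * (if (i <= 1)%N then pow3 Y j 0 (1 - i)%N 0 else 0))).
  by rewrite /= subnn /one3 /= mulr1.
move=> i j _ _ ij; case: ifP => i1; last by rewrite mulr0.
case: i i1 ij => [|[|i]] // _ ij; rewrite pow3_box //= ?mulr0 //.
have -> : (0%N == j) = false by lia.
by rewrite mulr0.
Qed.

End LeadingTerm.

Lemma pow3_lowest S mu : ordw deg_tot 1 S ->
  S 1%N 0%N 0%N = 0 -> S 0%N 1%N 0%N = 0 -> S 0%N 0%N 1%N = mu ->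
  forall k a b c, (a + b + c = k)%N ->
  pow3 S k a b c = if (a == 0%N) && (b == 0%N) then mu ^+ k else 0.
Proof.
move=> S1 S100 S010 S001; elim=> [|k IHk] a b c abck /=.
  have [-> -> ->] : [/\ a = 0%N, b = 0%N & c = 0%N] by split; lia.
  by rewrite /one3 expr0.
rewrite (mul3_supp1 (p := 0) (q := 0) (r := 1)) => [|i j l ia jb lc ijl].
  rewrite !subn0 S001 !leq0n /=; case: ifP => [c1|c0].
    by rewrite IHk; [case: ifP; rewrite ?exprS ?mulr0 | lia].
  by have -> : ((a == 0%N) && (b == 0%N)) = false by lia.
have [ijl2|ijl1] := leqP 2 (i + j + l).
  by rewrite (ordwX deg_totD (n := k) S1) ?mulr0 // /deg_tot; lia.
case: i ia ijl ijl1 => [|[|i]] ia; case: j jb => [|[|j]] jb; case: l lc => [|[|l]] lc //= _ _;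
  by rewrite ?S100 ?S010 ?(S1 0%N 0%N 0%N) ?mul0r.
Qed.

Lemma mul3_110 A B : ordw deg_tot 1 A -> ordw deg_tot 1 B -> A 0%N 1%N 0%N = 0 ->
  mul3 A B 1 1 0 = A 1%N 0%N 0%N * B 0%N 1%N 0%N.
Proof.
move=> A1 B1 A010; rewrite (mul3_supp1 (p := 1) (q := 0) (r := 0)) // => i j k.
case: i => [|[|i]] // _; case: j => [|[|j]] // _; case: k => [|k] // _ _.
- by rewrite A1 ?mul0r.
- by rewrite A010 mul0r.
- by rewrite B1 ?mulr0.
Qed.

Lemma mul3_11m_pow A S m mu : ordw deg_tot 2 A ->
  (forall a b c, (a + b + c = m)%N ->
     pow3 S m a b c = if (a == 0%N) && (b == 0%N) then mu ^+ m else 0) ->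
  ordw deg_tot m (pow3 S m) ->
  mul3 A (pow3 S m) 1 1 m = A 1%N 1%N 0%N * mu ^+ m.
Proof.
move=> A2 Sm Sm_ord; rewrite (mul3_supp1 (p := 1) (q := 1) (r := 0)) /=.
  by rewrite subnn subn0 Sm ?add0n.
move=> i j k i1 j1 km ijk.
have [ijk1|ijk2] := ltnP (i + j + k) 2; first by rewrite A2 ?mul0r.
have [ijk3|ijk2'] := ltnP 2 (i + j + k); first by rewrite Sm_ord ?mulr0 // /deg_tot; lia.
rewrite Sm; last by lia.
have -> : (((1 - i)%N == 0%N) && ((1 - j)%N == 0%N)) = false by lia.
by rewrite mulr0.
Qed.

Section Composition.
Variables (m : nat) (phi : fps3 K).
Hypothesis phi_supp : forall i j k,
  ~~ [&& (1 <= i)%N, (1 <= j)%N & (m <= k)%N] -> phi i j k = 0.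

Lemma comp3_11m A B D : ordw deg_tot 1 A -> ordw deg_tot 1 B -> ordw deg_tot 1 D ->
  A 0%N 1%N 0%N = 0 -> D 1%N 0%N 0%N = 0 -> D 0%N 1%N 0%N = 0 ->
  comp3 phi A B D 1 1 m
  = phi 1%N 1%N m * (A 1%N 0%N 0%N * B 0%N 1%N 0%N * D 0%N 0%N 1%N ^+ m).
Proof.
move=> A1 B1 D1 A010 D100 D010.
rewrite /comp3 (sum_ord3_supp1 (p := 1) (q := 1) (r := m)
  (f := fun i j k => phi i j k * mul3 (mul3 (pow3 A i) (pow3 B j)) (pow3 D k) 1 1 m)).
  rewrite ifT; last by lia.
  rewrite !pow3_1 (mul3_11m_pow (ordwM deg_totD A1 B1) (@pow3_lowest _ _ D1 D100 D010 erefl m)).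
    by rewrite mul3_110.
  by apply: ordw_leq (ordwX deg_totD (n := m) D1); rewrite muln1.
move=> i j k _ _ _ ijk.
case ijk_supp: [&& (1 <= i)%N, (1 <= j)%N & (m <= k)%N]; last by rewrite phi_supp ?ijk_supp ?mul0r.
rewrite (ordwM deg_totD (ordwM deg_totD (ordwX deg_totD (n := i) A1) (ordwX deg_totD (n := j) B1))
  (ordwX deg_totD (n := k) D1)) ?mulr0 // /deg_tot; lia.
Qed.

Lemma comp3_chi0 A B D s a c : ordw deg_chi_u 1 B -> ordw deg_chi_u s D ->
  (c <= m * s)%N -> comp3 phi A B D a 0 c = 0.
Proof.
move=> B1 Ds cms; apply: big1 => i _; apply: big1 => j _; apply: big1 => k _.
case ijk_supp: [&& (1 <= i)%N, (1 <= j)%N & (m <= k)%N]; last by rewrite phi_supp ?ijk_supp ?mul0r.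
rewrite (ordwM deg_chi_uD (ordwM deg_chi_uD (@ordw0 deg_chi_u (pow3 A i))
  (ordwX deg_chi_uD (n := j) B1)) (ordwX deg_chi_uD (n := k) Ds)) ?mulr0 //.
have : (m * s <= k * s)%N by rewrite leq_mul2r; case/and3P: ijk_supp => _ _ ->; rewrite orbT.
rewrite /deg_chi_u; lia.
Qed.

End Composition.
End Series.

Lemma det_mx22 (K : comNzRingType) (A : 'M[K]_2) :
  \det A = A 0 0 * A 1 1 - A 0 1 * A 1 0.
Proof.
rewrite (expand_det_row _ 0) !big_ord_recl big_ord0 addr0 /cofactor !det_mx11 /=.
rewrite !mxE /= expr0 expr1 mul1r mulN1r mulrN.
by congr (_ * _ - _ * _); congr (A _ _); apply/val_inj.
Qed.

Lemma exprVn_of_mulXS (K : fieldType) (x g : K) n :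
  g != 0 -> g = x * g ^+ n.+1 -> x = g ^- n.
Proof.
move=> g0 gE; apply: (mulIf (expf_neq0 n g0)); rewrite mulVf ?expf_neq0 //.
by apply: (mulIf g0); rewrite mul1r -mulrA -exprSr -gE.
Qed.

Lemma dwn_real (K : numDomainType) (P : fps2 K) l b :
  (forall c, (b <= c <= b + l)%N -> P 0%N c \is Num.real) ->
  dwn l P 0%N b \is Num.real.
Proof.
elim: l b => [|l IHl] b Preal; first by apply: Preal; rewrite addn0 leqnn.
rewrite [dwn _ _]/= /dw rpredM ?realn // IHl // => c /andP[bc cbl].
by apply: Preal; apply/andP; split; lia.
Qed.

Section DefiningFunction.
Variables (R : realType) (m : nat) (eps : R) (h : nat -> nat -> nat -> R[i]).

Lemma hyp_phi_chi0 a c : hyp_phi m eps h a 0 c = 0.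
Proof. by rewrite /hyp_phi andbF ltn0 andbF mulr0 mul0r addr0 mulr0 if_same. Qed.

Lemma hyp_phi_supp a b c : ~~ [&& (1 <= a)%N, (1 <= b)%N & (m <= c)%N] ->
  hyp_phi m eps h a b c = 0.
Proof.
move=> abc; rewrite /hyp_phi; case: ifP => // cm.
have -> : ((a == 1%N) && (b == 1%N) && (c == m)) = false by lia.
have -> : ((2 <= a)%N && (2 <= b)%N) = false by lia.
by rewrite mulr0 mul0r addr0 mulr0.
Qed.

Lemma hyp_phi_box a b c : (a <= 1)%N -> (b <= 1)%N ->
  hyp_phi m eps h a b c = 2^-1 * eps%:C * mon3 _ 1 1 m a b c.
Proof.
move=> a1 b1; rewrite /hyp_phi /mon3; have -> : (2 <= a)%N = false by lia.
case: ifP => cm; last by rewrite mul0r addr0 mulrA.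
have -> : (c == m) = false by lia.
by rewrite !andbF !mulr0.
Qed.

End DefiningFunction.

Section MappingEquation.
Variables (R : realType) (m : nat) (eps : R) (h h' : nat -> nat -> nat -> R[i]).
Variables F G : fps2 R[i].
Hypotheses (m_gt0 : (1 <= m)%N) (F00 : F 0%N 0%N = 0) (G00 : G 0%N 0%N = 0).
Hypothesis FG_maps : maps_into (hyp_phi m eps h) (hyp_phi m eps h') F G.

Local Notation C := R[i].
Local Notation phi := (hyp_phi m eps h).
Local Notation phi' := (hyp_phi m eps h').
Local Notation W := (add3 (U3 C) (scale3 'i phi)).
Local Notation T := (sub3 (U3 C) (scale3 'i phi)).
Local Notation FW := (comp2 F (Z3 C) W).
Local Notation GW := (comp2 G (Z3 C) W).
Local Notation FbT := (comp2 (conj2 F) (X3 C) T).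
Local Notation GbT := (comp2 (conj2 G) (X3 C) T).
Local Notation S := (scale3 (2^-1) (add3 GW GbT)).
Local Notation kap := ('i * (2^-1 * eps%:C)).

Let phi'_supp := @hyp_phi_supp R m eps h'.

Lemma W_chi0 i k : W i 0%N k = U3 C i 0%N k.
Proof. by rewrite /add3 /scale3 hyp_phi_chi0 mulr0 addr0. Qed.

Lemma T_chi0 i k : T i 0%N k = U3 C i 0%N k.
Proof. by rewrite /sub3 /scale3 hyp_phi_chi0 mulr0 subr0. Qed.

Lemma W_box i j k : (i <= 1)%N -> (j <= 1)%N ->
  W i j k = U3 C i j k + kap * mon3 _ 1 1 m i j k.
Proof. by move=> i1 j1; rewrite /add3 /scale3 hyp_phi_box // mulrA. Qed.

Lemma T_box i j k : (i <= 1)%N -> (j <= 1)%N ->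
  T i j k = U3 C i j k + - kap * mon3 _ 1 1 m i j k.
Proof. by move=> i1 j1; rewrite /sub3 /scale3 hyp_phi_box // mulrA mulNr. Qed.

Lemma GbT_chi0 a c : GbT a 0%N c = (a == 0%N)%:R * conjc (G 0%N c).
Proof. exact: comp2_X3_chi0 T_chi0 _ a c. Qed.

Lemma FbT_ord_chi_u : ordw deg_chi_u 1 FbT.
Proof.
move=> a b c; rewrite /deg_chi_u => bc0; have [-> ->] : b = 0%N /\ c = 0%N by lia.
by rewrite (comp2_X3_chi0 T_chi0) /conj2 F00 raddf0 mulr0.
Qed.

Lemma G_u0 a : G a 0%N = 0.
Proof.
have := FG_maps a 0 0.
rewrite (comp3_chi0 phi'_supp FW (s := 0) a FbT_ord_chi_u (@ordw0 _ deg_chi_u _)) //.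
by rewrite (comp2_Z3_chi0 W_chi0) GbT_chi0 G00 raddf0 mulr0 subr0 mulr0.
Qed.

Lemma S_ord_chi_u : ordw deg_chi_u 1 S.
Proof.
move=> a b c; rewrite /deg_chi_u => bc0; have [-> ->] : b = 0%N /\ c = 0%N by lia.
by rewrite /scale3 /add3 (comp2_Z3_chi0 W_chi0) GbT_chi0 G_u0 G00 raddf0 mulr0 addr0 mulr0.
Qed.

Lemma G_chi0 a c : (c <= m)%N -> G a c = (a == 0%N)%:R * conjc (G 0%N c).
Proof.
move=> cm; have := FG_maps a 0 c.
rewrite (comp3_chi0 phi'_supp FW a FbT_ord_chi_u S_ord_chi_u) ?muln1 //.
by rewrite (comp2_Z3_chi0 W_chi0) GbT_chi0 mulr0 => /eqP; rewrite subr_eq0 => /eqP.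
Qed.

Lemma G_real c : (c <= m)%N -> G 0%N c \is Num.real.
Proof. by move=> cm; apply/CrealP; rewrite [RHS]G_chi0 // mul1r. Qed.

Lemma FW_ord_tot : ordw deg_tot 1 FW.
Proof.
move=> a b c; rewrite /deg_tot => abc0.
have [-> -> ->] : [/\ a = 0%N, b = 0%N & c = 0%N] by split; lia.
by rewrite (comp2_Z3_chi0 W_chi0).
Qed.

Lemma G01_fixed : eps != 0 -> G 0%N 1%N = F 1%N 0%N * conjc (F 1%N 0%N) * G 0%N 1%N ^+ m.
Proof.
move=> eps_neq0.
have G01_conj : conjc (G 0%N 1%N) = G 0%N 1%N by rewrite {2}(G_chi0 0 m_gt0) mul1r.
have S010 : S 0%N 1%N 0%N = 0.
  rewrite /scale3 /add3 (comp2_Z3_010 m_gt0 W_box) (comp2_X3_010 m_gt0 T_box).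
  by rewrite /conj2 G_u0 raddf0 addr0 mulr0.
have S001 : S 0%N 0%N 1%N = G 0%N 1%N.
  by rewrite /scale3 /add3 (comp2_Z3_chi0 W_chi0) GbT_chi0 mul1r G01_conj; field.
have := FG_maps 1 1 m.
rewrite (comp2_Z3_11m m_gt0 W_box) (comp2_X3_11m m_gt0 T_box) (comp3_11m phi'_supp FW_ord_tot
  (ordw_mono deg_chi_u_le_tot FbT_ord_chi_u) (ordw_mono deg_chi_u_le_tot S_ord_chi_u)
  (comp2_Z3_010 m_gt0 W_box F) (@S_ord_chi_u 1%N 0%N 0%N erefl) S010).
rewrite hyp_phi_box // /mon3 !eqxx mulr1 (comp2_Z3_chi0 W_chi0) (comp2_X3_010 m_gt0 T_box).
rewrite S001 /conj2 G01_conj.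
set g := G 0%N 1%N; set X := F 1%N 0%N * _.
have two_half : (2 : C) * 2^-1 = 1 by rewrite mulfV // pnatr_eq0.
have -> : g * kap - g * - kap = g * ('i * eps%:C) * (2 * 2^-1) by ring.
have -> : 2 * 'i * (2^-1 * eps%:C * (X * g ^+ m)) = X * g ^+ m * ('i * eps%:C) * (2 * 2^-1)
  by ring.
by rewrite two_half !mulr1; apply: mulIf; rewrite mulf_neq0 ?neq0Ci ?fmorph_eq0.
Qed.

Lemma G_Ow1 : O_w 1 G.
Proof. by move=> a b; rewrite ltnS leqn0 => /eqP->; apply: G_u0. Qed.

Lemma dzG_Ow : O_w m.+1 (dz G).
Proof. by move=> a c; rewrite ltnS => cm; rewrite /dz G_chi0 // mul0r mulr0. Qed.

Lemma dwnG_real l : (l <= m)%N -> dwn l G 0%N 0%N \is Num.real.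
Proof. by move=> lm; apply: dwn_real => c /andP[_ cl]; apply: G_real; lia. Qed.

Lemma norm_dzF : eps != 0 -> dw G 0%N 0%N != 0 ->
  `|dz F 0%N 0%N| ^+ 2 = dw G 0%N 0%N ^- (m - 1).
Proof.
move=> eps_neq0; rewrite /dz /dw !mul1r sqr_normc => G01_neq0.
by apply: exprVn_of_mulXS => //; rewrite subn1 prednK //; apply: G01_fixed.
Qed.

End MappingEquation.

Lemma det_jac0 (R : realType) (F G : fps2 R[i]) :
  G 1%N 0%N = 0 -> \det (jac0 F G) = dz F 0%N 0%N * dw G 0%N 0%N.
Proof. by move=> G10; rewrite det_mx22 !mxE /= /dz G10 !mulr0 subr0. Qed.

Unset Implicit Arguments.

Theorem lemma3p1 (R : realType) (m : nat) (eps : R)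
  (h h' : nat -> nat -> nat -> R[i]) (F G : fps2 R[i]) :
  (1 <= m)%N ->
  (eps = 1 \/ eps = -1) ->
  hyp_real h -> hyp_real h' ->
  F 0%N 0%N = 0 -> G 0%N 0%N = 0 ->
  \det (jac0 F G) != 0 ->
  maps_into (hyp_phi m eps h) (hyp_phi m eps h') F G ->
  exists (lam : R[i]) (mu : R),
    [/\ lam != 0, dz F 0%N 0%N = lam, dw G 0%N 0%N = mu%:C
       & (mu ^- (m - 1)%N)%:C = `|lam| ^+ 2] /\
    [/\ O_w 1 G, O_w m.+1 (dz G)
       & forall l, (l <= m)%N -> dwn l G 0%N 0%N \is Num.real].
Proof.
move=> m_gt0 eps_pm1 _ _ F00 G00 detJ FG_maps.
have eps_neq0 : eps != 0 by case: eps_pm1 => ->; rewrite ?oppr_eq0 oner_eq0.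
have G_Ow1 := G_Ow1 m_gt0 F00 G00 FG_maps.
move: detJ; rewrite det_jac0 ?G_Ow1 // mulf_eq0 negb_or => /andP[dzF_neq0 dwG_neq0].
have /complex_realP[mu dwG] : dw G 0%N 0%N \is Num.real.
  exact: (dwnG_real m_gt0 F00 G00 FG_maps m_gt0).
exists (dz F 0%N 0%N), mu; split; split => //.
- by rewrite fmorphV rmorphXn /= -dwG (norm_dzF m_gt0 F00 G00 FG_maps).
- exact: dzG_Ow m_gt0 F00 G00 FG_maps.
- exact: dwnG_real m_gt0 F00 G00 FG_maps.
Qed.
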